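(* Let $X$ be a nontrivial real Banach space with dual $X^*$. The following assertions are equivalent: (i) $X$ is weakly octahedral; (ii) whenever $E$ is a finite-dimensional subspace of $X$, $x^*\in B_{X^*}$, and $\varepsilon>0$, there is a $y\in S_X$ such that $\|x+ty\|\geq(1-\varepsilon)(|x^*(x)|+t)$ for all $x\in S_E$ and $t>0$; (ii') whenever $n\in\mathbb{N}$, $x_1,\dots,x_n\in S_X$, $x^*\in B_{X^*}$, and $\varepsilon>0$, there is a $y\in S_X$ such that $\|x_i+ty\|\geq(1-\varepsilon)(|x^*(x_i)|+t)$ for all $i\in\{1,\dots,n\}$ and $t>0$; (iii) whenever $n\in\mathbb{N}$, $x_1,\dots,x_n\in S_X$, $x^*\in B_{X^*}$, and $\varepsilon>0$, there is a $y\in S_X$ such that $\|x_i+ty\|\geq(1-\varepsilon)(|x^*(x_i)|+t)$ for all $i\in\{1,\dots,n\}$ and $t\geq\varepsilon$.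
   Context: $B_X$, $S_X$ denote the closed unit ball and unit sphere of $X$; similarly for $X^*$. The norm on $X$ (or $X$ itself) is called weakly octahedral if for every finite-dimensional subspace $E$ of $X$, every $x^*\in B_{X^*}$, and every $\varepsilon>0$, there is a $y\in S_X$ such that $\|x+y\|\geq(1-\varepsilon)(|x^*(x)|+\|y\|)$ for all $x\in E$. *)

From HB Require Import structures.
From mathcomp Require Import all_boot all_order all_algebra.
From mathcomp Require Import all_classical all_reals all_analysis.
Set Implicit Arguments. Unset Strict Implicit. Unset Printing Implicit Defensive.
Import Order.TTheory GRing.Theory Num.Theory.
Import numFieldNormedType.Exports.
Local Open Scope classical_set_scope.
Local Open Scope ring_scope.

(* A real Banach space is modelled as a complete normed module over a
   realType R (every realType is the real line). *)

(* x^* \in B_{X^*}: a linear functional of norm at most 1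
   (such a functional is automatically continuous). *)
Definition in_dual_ball (R : realType) (X : normedModType R) (f : X -> R) : Prop :=
  (forall (a : R) (x y : X), f (a *: x + y) = a * f x + f y) /\
  (forall x : X, `|f x| <= `|x|).

Definition fin_dim_subspace (R : realType) (X : normedModType R) (E : set X) : Prop :=
  exists (n : nat) (v : 'I_n -> X),
    E = [set x | exists c : 'I_n -> R, x = \sum_(i < n) c i *: v i].

Definition nontrivial (R : realType) (X : normedModType R) : Prop :=
  exists x : X, x != 0.

Definition weakly_octahedral (R : realType) (X : normedModType R) : Prop :=
  forall (E : set X) (f : X -> R) (eps : R),
    fin_dim_subspace E -> in_dual_ball f -> 0 < eps ->
    exists y : X, `|y| = 1 /\
      forall x : X, E x -> (1 - eps) * (`|f x| + `|y|) <= `|x + y|.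

Definition cond_ii (R : realType) (X : normedModType R) : Prop :=
  forall (E : set X) (f : X -> R) (eps : R),
    fin_dim_subspace E -> in_dual_ball f -> 0 < eps ->
    exists y : X, `|y| = 1 /\
      forall (x : X) (t : R), E x -> `|x| = 1 -> 0 < t ->
        (1 - eps) * (`|f x| + t) <= `|x + t *: y|.

Definition cond_ii' (R : realType) (X : normedModType R) : Prop :=
  forall (n : nat) (xs : 'I_n -> X) (f : X -> R) (eps : R),
    (forall i, `|xs i| = 1) -> in_dual_ball f -> 0 < eps ->
    exists y : X, `|y| = 1 /\
      forall (i : 'I_n) (t : R), 0 < t ->
        (1 - eps) * (`|f (xs i)| + t) <= `|xs i + t *: y|.

Definition cond_iii (R : realType) (X : normedModType R) : Prop :=
  forall (n : nat) (xs : 'I_n -> X) (f : X -> R) (eps : R),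
    (forall i, `|xs i| = 1) -> in_dual_ball f -> 0 < eps ->
    exists y : X, `|y| = 1 /\
      forall (i : 'I_n) (t : R), eps <= t ->
        (1 - eps) * (`|f (xs i)| + t) <= `|xs i + t *: y|.

From HB Require Import structures.
From mathcomp Require Import all_boot all_order all_algebra.
From mathcomp Require Import all_classical all_reals all_analysis.
From mathcomp Require Import lra finmap.
Import Order.TTheory GRing.Theory Num.Theory.
Import numFieldNormedType.Exports.
Set Implicit Arguments. Unset Strict Implicit. Unset Printing Implicit Defensive.
Local Open Scope ring_scope.

(* (i) => (ii) => (ii') => (iii) only use homogeneity of the inequality and
   specialisation.  For (iii) => (i), the unit sphere of a finite-dimensional
   subspace E is compact, so it has a finite (eps^2/8)-net of unit vectors, and
   (iii) for this net with eps/2 yields y.  For a unit vector u of E and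
   t >= eps/2 the estimate passes from the nearest net point at a cost of
   2 eps^2/8, which the margin (eps/2) t absorbs; for t < eps/2 it follows from
   |u + t y| >= 1 - t.  Homogeneity extends it from the sphere to all of E. *)

Section NormedFacts.
Variable R : realType.

Lemma mxnorm_coord_le n (c : 'rV[R]_n) i : `|c ord0 i| <= `|c|.
Proof.
rewrite [leRHS]/Num.norm /= mx_normrE; apply/bigmax_geP; right => /=.
by exists (ord0, i).
Qed.

Lemma mxnorm_le n (c : 'rV[R]_n) B :
  0 <= B -> (forall i, `|c ord0 i| <= B) -> `|c| <= B.
Proof.
move=> B0 cB; rewrite [leLHS]/Num.norm /= mx_normrE.
by apply: bigmax_le => // -[i j] _ /=; rewrite (ord1 i).
Qed.

Lemma continuous_norm_comp (T : topologicalType) (V : normedModType R) (g : T -> V) :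
  continuous g -> continuous (fun t => `|g t|).
Proof. by move=> gc t; apply: continuous_comp (gc t) (@norm_continuous _ V (g t)). Qed.

Lemma compact_finite_net (V : normedModType R) (A : set V) (e : R) :
  compact A -> 0 < e ->
  exists k (u : 'I_k -> V),
    (forall j, A (u j)) /\ forall x, A x -> exists j, `|x - u j| < e.
Proof.
move=> cA e0; rewrite compact_cover in cA.
have [|D DA Acov] := cA V A (ball^~ e) (fun a _ => ball_open a e).
  by move=> x Ax; exists x => //; exact: ballxx.
pose s := enum_fset D.
exists (size s), (tnth (in_tuple s)); split => [j|x /Acov[a aD xa]].
  by rewrite -in_setE; apply: DA; exact: mem_tnth.
have /tnthP[j aj] : a \in in_tuple s by [].
by exists j; rewrite -aj distrC; move: xa; rewrite -ball_normE.
Qed.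

End NormedFacts.

Section LinearCombination.
Variables (R : realType) (X : normedModType R).

Definition lincomb n (v : 'I_n -> X) (c : 'rV[R]_n) : X :=
  \sum_(i < n) c ord0 i *: v i.

Lemma lincomb_is_linear n (v : 'I_n -> X) : linear (lincomb v).
Proof.
move=> a c d; rewrite /lincomb scaler_sumr -big_split; apply: eq_bigr => i _.
by rewrite !mxE scalerDl scalerA.
Qed.

HB.instance Definition _ n (v : 'I_n -> X) :=
  GRing.isLinear.Build R 'rV[R]_n X _ (lincomb v) (lincomb_is_linear v).

Lemma range_lincomb n (v : 'I_n -> X) :
  [set x | exists c : 'I_n -> R, x = \sum_(i < n) c i *: v i]%classic = range (lincomb v).
Proof.
apply/funext => x; apply/propext; split => [[c ->]|[c _ <-]].
  by exists (\row_i c i) => //; apply: eq_bigr => i _; rewrite mxE.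
by exists (c ord0).
Qed.

Lemma fin_dim_subspace_range n (v : 'I_n -> X) : fin_dim_subspace (range (lincomb v)).
Proof. by exists n, v; rewrite range_lincomb. Qed.

Lemma range_lincomb_generator n (v : 'I_n -> X) i : range (lincomb v) (v i).
Proof.
exists (\row_j (j == i)%:R) => //; rewrite /lincomb (bigD1 i) //= mxE eqxx scale1r.
by rewrite big1 ?addr0 // => j /negbTE ji; rewrite mxE ji scale0r.
Qed.

Lemma fin_dim_subspaceZ (E : set X) a x : fin_dim_subspace E -> E x -> E (a *: x).
Proof.
move=> [n [v ->]]; rewrite range_lincomb => -[c _ <-].
by exists (a *: c); rewrite // linearZ.
Qed.

Lemma lincomb_norm_le n (v : 'I_n -> X) c :
  `|lincomb v c| <= (\sum_i `|v i|) * `|c|.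
Proof.
apply: le_trans (ler_norm_sum _ _ _) _; rewrite mulr_suml; apply: ler_sum => i _.
by rewrite normrZ mulrC ler_wpM2l // mxnorm_coord_le.
Qed.

Lemma lincomb_continuous n (v : 'I_n -> X) : continuous (lincomb v).
Proof.
apply: (@bounded_linear_continuous _ _ _ (lincomb v)); apply/linear_boundedP.
apply: filterS (nbhs_pinfty_ge (num_real (\sum_i `|v i|))) => r Kr c.
by apply: le_trans (lincomb_norm_le v c) _; rewrite ler_wpM2r.
Qed.

Lemma lincomb_inj_coord_bound n (v : 'I_n -> X) :
  (forall c, lincomb v c = 0 -> c = 0) ->
  exists M, 0 <= M /\ forall c, `|c| <= M * `|lincomb v c|.
Proof.
case: n v => [v _|n v inj].
  by exists 0; split=> // c; rewrite (thinmx0 c) normr0 mul0r.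
pose S := [set d : 'rV[R]_n.+1 | `|d| = 1]%classic.
have S1 : S (const_mx 1).
  apply/le_anti; rewrite mxnorm_le //=; last by move=> j; rewrite mxE normr1.
  by have := mxnorm_coord_le (const_mx 1 : 'rV[R]_n.+1) ord0; rewrite mxE normr1.
have cS : compact S.
  apply: bounded_closed_compact; last first.
    have := @preimage_closed _ _ (Num.norm : 'rV[R]_n.+1 -> R)
      [set x : R | x = 1]%classic.
    by apply=> [d _|]; [exact: norm_continuous|exact: closed_eq].
  by apply: filterS (nbhs_pinfty_ge (num_real 1)) => M M1 d /= ->.
have cf : {within S, continuous (fun d => `|lincomb v d|)}%classic.
  exact/continuous_subspaceT/continuous_norm_comp/lincomb_continuous.
have [d0 /[!in_setE] Sd0 d0min] := EVT_min_rV (ex_intro _ _ S1) cS cf.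
set m := `|lincomb v d0| in d0min.
have m0 : 0 < m.
  rewrite normr_gt0; apply/eqP => /inj d00; move: Sd0.
  by rewrite /S /= d00 normr0 => /esym/eqP; rewrite oner_eq0.
exists m^-1; split => [|c]; first by rewrite invr_ge0 ltW.
have [->|c0] := eqVneq c 0; first by rewrite normr0 mulr_ge0 // invr_ge0 ltW.
have nc0 : 0 < `|c| by rewrite normr_gt0.
have /d0min : `|c|^-1 *: c \in S.
  by rewrite in_setE /S /= normrZ ger0_norm ?invr_ge0 // mulVf // gt_eqF.
rewrite linearZ normrZ ger0_norm ?invr_ge0 // => mle.
rewrite -(ler_pM2l m0) mulrA mulfV ?gt_eqF // mul1r.
by rewrite -(ler_pM2l nc0) mulrA mulfV ?gt_eqF // mul1r mulrC in mle.
Qed.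

Lemma lincomb_drop_dependent n (v : 'I_n.+1 -> X) (d : 'rV[R]_n.+1) i :
  d ord0 i != 0 -> lincomb v d = 0 ->
  forall c, exists c', lincomb (v \o lift i) c' = lincomb v c.
Proof.
move=> di vd0 c; pose e := c - (c ord0 i / d ord0 i) *: d.
have ve : lincomb v e = lincomb v c by rewrite linearB linearZ /= vd0 scaler0 subr0.
have ei : e ord0 i = 0 by rewrite !mxE divfK // subrr.
exists (\row_k e ord0 (lift i k)); rewrite -ve [in RHS]/lincomb (bigD1_ord i) //=.
by rewrite ei scale0r add0r; apply: eq_bigr => k _; rewrite mxE.
Qed.

Lemma lincomb_insert0 n (v : 'I_n.+1 -> X) i (c : 'rV[R]_n) :
  exists2 c', lincomb v c' = lincomb (v \o lift i) c & `|c'| <= `|c|.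
Proof.
exists (\row_j oapp (c ord0) 0 (unlift i j)).
  rewrite /lincomb (bigD1_ord i) //= mxE unlift_none scale0r add0r.
  by apply: eq_bigr => k _; rewrite mxE liftK.
apply: mxnorm_le => // j; rewrite mxE; case: unlift => [k|] /=.
  exact: mxnorm_coord_le.
by rewrite normr0.
Qed.

(* A dependent family can drop a generator without changing its span; for an
   independent one, |c| is controlled by the minimum of |lincomb v| on the unit
   sphere of 'rV_n. *)
Lemma lincomb_coord_bound n (v : 'I_n -> X) : exists M, 0 <= M /\
  forall c, exists c', lincomb v c' = lincomb v c /\ `|c'| <= M * `|lincomb v c|.
Proof.
elim: n v => [|n IH] v.
  by exists 0; split=> // c; exists c; rewrite (thinmx0 c) normr0 mul0r.
have [inj|/existsNP[d /not_implyP[vd0 /eqP d0]]] :=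
  pselect (forall c, lincomb v c = 0 -> c = 0).
  by have [M [M0 HM]] := lincomb_inj_coord_bound inj; exists M; split=> // c; exists c.
have [i di] : exists i, d ord0 i != 0.
  apply/existsP; move: d0; apply: contraNT => /existsPn d0.
  by apply/eqP/rowP => j; rewrite mxE; apply/eqP/negPn/d0.
have [M [M0 HM]] := IH (v \o lift i); exists M; split=> // c.
have [c2 <-] := lincomb_drop_dependent di vd0 c.
have [c3 [<- c3M]] := HM c2.
have [c' vc' c'c3] := lincomb_insert0 v i c3.
by exists c'; split; last exact: le_trans c'c3 c3M.
Qed.

Lemma compact_span_sphere n (v : 'I_n -> X) :
  compact [set x | range (lincomb v) x /\ `|x| = 1]%classic.
Proof.
have [M [M0 HM]] := lincomb_coord_bound v.
pose C := [set c : 'rV[R]_n | `|c| <= M /\ `|lincomb v c| = 1]%classic.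
have -> : [set x | range (lincomb v) x /\ `|x| = 1]%classic = (lincomb v @` C)%classic.
  apply/seteqP; split => [x [[c _ <-] c1]|_ [c [_ c1] <-]].
    have [c' [vc' c'M]] := HM c.
    by exists c' => //; rewrite /C /= vc' c1; rewrite c1 mulr1 in c'M.
  by split; first exists c.
apply: continuous_compact; first exact/continuous_subspaceT/lincomb_continuous.
apply: bounded_closed_compact.
  apply: filterS (nbhs_pinfty_ge (num_real M)) => B MB c [cM _].
  exact: le_trans MB.
apply: closedI.
  have := @preimage_closed _ _ (Num.norm : 'rV[R]_n -> R) [set x : R | x <= M]%classic.
  by apply=> [d _|]; [exact: norm_continuous|exact: closed_le].
have := @preimage_closed _ _ (fun c => `|lincomb v c|) [set x : R | x = 1]%classic.
apply=> [d _|]; last exact: closed_eq.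
exact: (continuous_norm_comp (@lincomb_continuous _ v)) d.
Qed.

End LinearCombination.

Section OctahedralInequality.
Variables (R : realType) (X : normedModType R).
Implicit Types (f : X -> R) (x y : X).

Lemma dual_ball0 f : in_dual_ball f -> f 0 = 0.
Proof.
by case=> _ fle; apply/normr0_eq0/le_anti; rewrite normr_ge0 andbT -(normr0 X) fle.
Qed.

Lemma dual_ballZ f a x : in_dual_ball f -> f (a *: x) = a * f x.
Proof. by move=> fX; rewrite -[a *: x]addr0 fX.1 dual_ball0 // addr0. Qed.

Lemma dual_ballB f x y : in_dual_ball f -> f (x - y) = f x - f y.
Proof. by move=> fX; rewrite -scaleN1r addrC fX.1 mulN1r addrC. Qed.

Lemma octahedral_ineq_scale f eps a t x y : in_dual_ball f -> 0 < a ->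
  ((1 - eps) * (`|f (a *: x)| + a * t) <= `|a *: x + (a * t) *: y|) =
  ((1 - eps) * (`|f x| + t) <= `|x + t *: y|).
Proof.
move=> fX a0; rewrite dual_ballZ // normrM (gtr0_norm a0) -mulrDr -scalerA -scalerDr.
by rewrite normrZ (gtr0_norm a0) mulrCA ler_pM2l.
Qed.

Lemma octahedral_near_sphere f eps u x y :
  in_dual_ball f -> 0 < eps -> eps <= 1 -> `|u| = 1 -> `|y| = 1 ->
  `|u - x| <= eps ^+ 2 / 8 ->
  (forall t, eps / 2 <= t -> (1 - eps / 2) * (`|f x| + t) <= `|x + t *: y|) ->
  forall t, 0 < t -> (1 - eps) * (`|f u| + t) <= `|u + t *: y|.
Proof.
move=> fX eps0 eps1 u1 y1 ux Hx t t0.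
have fu1 : `|f u| <= 1 by rewrite -u1; case: fX.
have [t_small|t_large] := ltP t (eps / 2).
  have : 1 - t <= `|u + t *: y|.
    by have := lerB_normD u (t *: y); rewrite u1 normrZ y1 gtr0_norm // mulr1.
  apply: le_trans; nra.
have fux : `|f u| - `|u - x| <= `|f x|.
  rewrite lerBlDr -lerBlDl; apply: le_trans (lerB_dist _ _) _.
  by rewrite -dual_ballB //; case: fX.
have uxy : `|x + t *: y| <= `|u - x| + `|u + t *: y|.
  by have := ler_normD (x - u) (u + t *: y); rewrite addrA subrK distrC.
have := Hx t t_large.
have : (1 - eps / 2) * (`|f u| - `|u - x| + t) <= (1 - eps / 2) * (`|f x| + t).
  by rewrite ler_wpM2l ?lerD2r //; lra.
have : eps * (eps / 2) <= eps * t by rewrite ler_wpM2l // ltW.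
have : 0 <= eps * `|f u| by rewrite mulr_ge0 // ltW.
nra.
Qed.

End OctahedralInequality.

Section WeakOctahedralityEquivalences.
Variables (R : realType) (X : normedModType R).

Lemma weakly_octahedral_cond_ii : weakly_octahedral X -> cond_ii X.
Proof.
move=> wo E f eps Efin fX eps0; have [y [y1 Hy]] := wo E f eps Efin fX eps0.
exists y; split => // x t Ex _ t0.
have := Hy _ (fin_dim_subspaceZ t^-1 Efin Ex); rewrite y1 -[y in `|_ + y|]scale1r.
by rewrite -(octahedral_ineq_scale _ _ _ _ fX t0) scalerA mulfV ?gt_eqF // scale1r mulr1.
Qed.

Lemma cond_ii_cond_ii' : cond_ii X -> cond_ii' X.
Proof.
move=> H n xs f eps xs1 fX eps0.
have [y [y1 Hy]] := H _ f eps (fin_dim_subspace_range xs) fX eps0.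
by exists y; split => // i t t0; apply: Hy => //; exact: range_lincomb_generator.
Qed.

Lemma cond_ii'_cond_iii : cond_ii' X -> cond_iii X.
Proof.
move=> H n xs f eps xs1 fX eps0; have [y [y1 Hy]] := H n xs f eps xs1 fX eps0.
by exists y; split => // i t et; apply: Hy; exact: lt_le_trans et.
Qed.

Lemma cond_iii_weakly_octahedral : cond_iii X -> weakly_octahedral X.
Proof.
move=> H E f eps [n [v ->]] fX; rewrite range_lincomb.
wlog eps1 : eps / eps <= 1 => [WLOG eps0|eps0].
  have [le1|/ltW lt1] := leP eps 1; first exact: WLOG.
  have [y [y1 Hy]] := WLOG 1 (lexx 1) ltr01; exists y; split => // x Ex.
  by apply: le_trans (Hy x Ex); rewrite ler_wpM2r ?addr_ge0 // lerD2l lerN2.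
have delta0 : 0 < eps ^+ 2 / 8 by rewrite divr_gt0 // exprn_gt0.
have [k [u [uS unet]]] :=
  compact_finite_net (compact_span_sphere (v := v)) delta0.
have eps2 : 0 < eps / 2 by rewrite divr_gt0.
have [y [y1 Hy]] := H k u f (eps / 2) (fun j => proj2 (uS j)) fX eps2.
exists y; split => // _ [c _ <-]; rewrite y1; set x := lincomb v c.
have [->|x0] := eqVneq x 0.
  by rewrite add0r y1 dual_ball0 // normr0 add0r mulr1 lerBlDr lerDl ltW.
pose s := `|x|; have s0 : 0 < s by rewrite normr_gt0.
have Sx : range (lincomb v) (s^-1 *: x) /\ `|s^-1 *: x| = 1.
  split; first by exists (s^-1 *: c); rewrite // linearZ.
  by rewrite normrZ gtr0_norm ?invr_gt0 // mulVf // gt_eqF.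
have [j /ltW near_j] := unet _ Sx.
have := octahedral_near_sphere fX eps0 eps1 Sx.2 y1 near_j (Hy j).
move/(_ s^-1); rewrite invr_gt0 => /(_ s0).
by rewrite -(octahedral_ineq_scale _ _ _ _ fX s0) scalerA mulfV ?gt_eqF // !scale1r.
Qed.

End WeakOctahedralityEquivalences.

Theorem proposition2p5 (R : realType) (X : completeNormedModType R) :
  nontrivial X ->
  (weakly_octahedral X <-> cond_ii X) /\
  (weakly_octahedral X <-> cond_ii' X) /\
  (weakly_octahedral X <-> cond_iii X).
Proof.
move=> _.
have wo_ii := @weakly_octahedral_cond_ii R X.
have ii_ii' := @cond_ii_cond_ii' R X.
have ii'_iii := @cond_ii'_cond_iii R X.
have iii_wo := @cond_iii_weakly_octahedral R X.
by split; [|split]; split; auto.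
Qed.
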